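(* Let $a>\log M+3$. Suppose that: (a) $X$ is distributed as the uniform mixture of $M$ unit-variance Gaussians on $\mathbb{R}$ with true centers $\mu_1^*,\dots,\mu_M^*$, all lying in $(-\infty,-10a)\cup(a,+\infty)$, with at least one true center in $(a,3a)$; (b) the current centers $\mu_1,\dots,\mu_M\in\mathbb{R}$ are such that for every true center $\mu_j^*\in(-\infty,-10a)$ there exists $j'$ with $|\mu_{j'}-\mu_j^*|\le|\mu_j^*|/6$. Then for every $i\in[M]$ with $\mu_i\in[0,4a]$, we have $\mathbb{E}[w_i(X)X]\ge0$.
   Context: Dimension $d=1$. The uniform mixture with true centers $\mu_1^*,\dots,\mu_M^*$ has density $\frac1M\sum_j\frac{1}{\sqrt{2\pi}}e^{-(x-\mu_j^* )^2/2}$. For current centers $\mu_1,\dots,\mu_M$, the membership weights are $$w_i(x)=\frac{e^{-(x-\mu_i)^2/2}}{\sum_{j=1}^M e^{-(x-\mu_j)^2/2}}.$$ *)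

From Stdlib Require Import Reals Lra.
Open Scope R_scope.

Fixpoint sumR (n : nat) (f : nat -> R) : R :=
  match n with
  | O => 0
  | S k => sumR k f + f k
  end.

Definition gauss (x : R) : R := exp (- (x ^ 2) / 2) / sqrt (2 * PI).

Definition mixture_density (M : nat) (mustar : nat -> R) (x : R) : R :=
  / INR M * sumR M (fun j => gauss (x - mustar j)).

Definition weight (M : nat) (mu : nat -> R) (i : nat) (x : R) : R :=
  exp (- ((x - mu i) ^ 2) / 2) / sumR M (fun j => exp (- ((x - mu j) ^ 2) / 2)).

Definition improper_integral_R (f : R -> R) (L : R) : Prop :=
  forall eps : R, eps > 0 ->
  exists T0 : R, forall a b : R, a <= - T0 -> T0 <= b ->
    exists pr : Riemann_integrable f a b, Rabs (RiemannInt pr - L) < eps.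

Definition mixture_expectation_is (M : nat) (mustar : nat -> R) (g : R -> R) (L : R) : Prop :=
  improper_integral_R (fun x => g x * mixture_density M mustar x) L.

From Stdlib Require Import Reals Lra Lia Classical.
From Coquelicot Require Import Coquelicot.
Open Scope R_scope.

(* Write the mixture density as a sum over the true centers: the expectation becomes a
   sum of component integrals of [w_i(x) x exp (-(x - m)^2 / 2)].  For a true center
   [m > a] the component is nonnegative: since [mu_i >= 0], [w_i] is at most
   [M e^(1/2) + 1] times larger on the negative axis than on [0, 1], while the Gaussian
   mass of [-x] on the negative axis is smaller than that of [x] on [0, 1] by a factor
   [e^m >= M e^3].  For a true center [m < -10 a] the component may be negative, but a
   current center within [|m| / 6] of [m] makes [w_i] so small there that it is at least
   [-100 e^(-7 a^2)].  The true center in [(a, 3a)] contributes at least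
   [e^(-1/4 - 9 a^2 / 4) / (2 M)] near the midpoint between it and [mu_i], and
   [a > ln M + 3] makes this dominate the [M] possibly negative components.  The
   improper integral exists because the integrand has the sign of [x] and each component
   is bounded by a multiple of the Cauchy density. *)

Lemma exp_le_compat x y : x <= y -> exp x <= exp y.
Proof. intros [H|H]; [apply Rlt_le, exp_increasing, H | rewrite H; apply Rle_refl]. Qed.

Lemma sumR_ext n f g : (forall j, (j < n)%nat -> f j = g j) -> sumR n f = sumR n g.
Proof.
  induction n as [|n IH]; simpl; intros H; [reflexivity|].
  rewrite IH, H; auto; intros; apply H; lia.
Qed.

Lemma sumR_le n f g : (forall j, (j < n)%nat -> f j <= g j) -> sumR n f <= sumR n g.
Proof.
  induction n as [|n IH]; simpl; intros H; [lra|].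
  assert (f n <= g n) by (apply H; lia).
  assert (sumR n f <= sumR n g) by (apply IH; intros; apply H; lia).
  lra.
Qed.

Lemma sumR_scal n c f : sumR n (fun j => c * f j) = c * sumR n f.
Proof. induction n as [|n IH]; simpl; [ring | rewrite IH; ring]. Qed.

Lemma sumR_plus n f g : sumR n (fun j => f j + g j) = sumR n f + sumR n g.
Proof. induction n as [|n IH]; simpl; [ring | rewrite IH; ring]. Qed.

Lemma sumR_const n c : sumR n (fun _ => c) = INR n * c.
Proof. induction n as [|n IH]; simpl sumR; [simpl; ring | rewrite IH, S_INR; ring]. Qed.

Lemma sumR_nonneg n f : (forall j, (j < n)%nat -> 0 <= f j) -> 0 <= sumR n f.
Proof. intros H. rewrite <- (Rmult_0_r (INR n)), <- sumR_const. apply sumR_le; auto. Qed.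

Lemma sumR_ge_term n f k :
  (forall j, (j < n)%nat -> 0 <= f j) -> (k < n)%nat -> f k <= sumR n f.
Proof.
  induction n as [|n IH]; intros H Hk; [lia|]. simpl.
  assert (0 <= sumR n f) by (apply sumR_nonneg; intros; apply H; lia).
  destruct (Nat.eq_dec k n) as [->|Hne]; [lra|].
  assert (f k <= sumR n f) by (apply IH; [intros; apply H | ]; lia).
  assert (0 <= f n) by (apply H; lia).
  lra.
Qed.

Lemma Rabs_sumR_le n f : Rabs (sumR n f) <= sumR n (fun j => Rabs (f j)).
Proof.
  induction n as [|n IH]; simpl; [rewrite Rabs_R0; lra|].
  eapply Rle_trans; [apply Rabs_triang | lra].
Qed.

Lemma ex_derive_sumR n (F : nat -> R -> R) x :
  (forall j, ex_derive (F j) x) -> ex_derive (fun y => sumR n (fun j => F j y)) x.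
Proof.
  intros H; induction n as [|n IH]; simpl.
  - apply ex_derive_const.
  - apply (ex_derive_plus (fun y => sumR n (fun j => F j y)) (F n)); auto.
Qed.

Lemma RInt_sumR n (F : nat -> R -> R) a b :
  (forall j, ex_RInt (F j) a b) ->
  ex_RInt (fun y => sumR n (fun j => F j y)) a b /\
  RInt (fun y => sumR n (fun j => F j y)) a b = sumR n (fun j => RInt (F j) a b).
Proof.
  intros H; induction n as [|n [IHex IHeq]]; simpl.
  - split; [apply ex_RInt_const|]. rewrite RInt_const. apply Rmult_0_r.
  - split.
    + apply (ex_RInt_plus (fun y => sumR n (fun j => F j y)) (F n)); auto.
    + rewrite (RInt_plus (fun y => sumR n (fun j => F j y)) (F n)); auto.
      rewrite IHeq. reflexivity.
Qed.

Lemma continuous_of_ex_derive (f : R -> R) x : ex_derive f x -> continuous f x.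
Proof. apply (ex_derive_continuous (K:=R_AbsRing) (V:=R_NormedModule)). Qed.

Lemma continuous_scal_R (f : R -> R) c x : continuous f x -> continuous (fun y => c * f y) x.
Proof. intros Hf. apply (continuous_mult (fun _ => c) f); [apply continuous_const | exact Hf]. Qed.

Definition gauss_kernel (m x : R) : R := exp (- ((x - m) ^ 2) / 2).

Ltac solve_continuous :=
  intros ?; apply continuous_of_ex_derive; unfold gauss_kernel; auto_derive; auto.

Section ContinuousIntegrals.

Variable f : R -> R.
Hypothesis f_cont : forall x, continuous f x.

Lemma ex_RInt_cont a b : ex_RInt f a b.
Proof. apply (ex_RInt_continuous (V:=R_CompleteNormedModule)); auto. Qed.

Lemma RInt_Chasles_cont a b c : RInt f a c = RInt f a b + RInt f b c.
Proof. symmetry. apply (RInt_Chasles (V:=R_CompleteNormedModule)); apply ex_RInt_cont. Qed.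

Lemma RInt_scal_cont c a b : RInt (fun x => c * f x) a b = c * RInt f a b.
Proof. apply (RInt_scal (V:=R_CompleteNormedModule)), ex_RInt_cont. Qed.

Lemma RInt_ge_0_cont a b : a <= b -> (forall x, a < x < b -> 0 <= f x) -> 0 <= RInt f a b.
Proof. intros. apply RInt_ge_0; auto. apply ex_RInt_cont. Qed.

Lemma RInt_le_0_cont a b : a <= b -> (forall x, a < x < b -> f x <= 0) -> RInt f a b <= 0.
Proof.
  intros Hab Hf.
  assert (Hopp : RInt (fun x => - f x) a b = - RInt f a b)
    by apply (RInt_opp (V:=R_CompleteNormedModule)), ex_RInt_cont.
  assert (0 <= RInt (fun x => - f x) a b).
  { apply RInt_ge_0; auto.
    - apply (ex_RInt_opp (V:=R_CompleteNormedModule)), ex_RInt_cont.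
    - intros x Hx. specialize (Hf x Hx). lra. }
  lra.
Qed.

Lemma RInt_le_cont (g : R -> R) a b : (forall x, continuous g x) -> a <= b ->
  (forall x, a < x < b -> f x <= g x) -> RInt f a b <= RInt g a b.
Proof.
  intros Hg Hab Hfg.
  apply RInt_le; auto; apply (ex_RInt_continuous (V:=R_CompleteNormedModule)); auto.
Qed.

End ContinuousIntegrals.

(* Stated at type [R] rather than at the carrier of [R_CompleteNormedModule], so that
   [field] applies to the rewritten goals. *)
Lemma RInt_antiderivative (F f : R -> R) a b :
  (forall x, is_derive F x (f x)) -> (forall x, continuous f x) ->
  @eq R (RInt f a b) (F b - F a).
Proof. intros HF Hf. apply is_RInt_unique, (is_RInt_derive F f); auto. Qed.

Lemma RInt_Cauchy_kernel m p q :
  RInt (fun x => / (1 + (x - m)^2)) p q = atan (q - m) - atan (p - m).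
Proof.
  apply (RInt_antiderivative (fun x => atan (x - m))).
  - intros x. apply is_derive_Reals.
    replace (/ (1 + (x - m) ^ 2)) with (/ (1 + (x - m)^2) * 1) by ring.
    apply (derivable_pt_lim_comp (fun x => x - m) atan).
    + apply is_derive_Reals. auto_derive; auto; ring.
    + apply derivable_pt_lim_atan.
  - solve_continuous. assert (0 <= (x - m)^2) by apply pow2_ge_0. lra.
Qed.

Lemma abs_RInt_le_Cauchy (f : R -> R) m C p q :
  (forall x, continuous f x) -> p <= q ->
  (forall x, Rabs (f x) <= C / (1 + (x - m)^2)) -> Rabs (RInt f p q) <= C * PI.
Proof.
  intros Hf Hpq Hb.
  assert (HC : 0 <= C) by (specialize (Hb m); rewrite Rminus_eq_0 in Hb;
    assert (0 <= Rabs (f m)) by apply Rabs_pos; lra).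
  eapply Rle_trans; [apply abs_RInt_le; auto; apply ex_RInt_cont; auto|].
  eapply Rle_trans.
  { apply (RInt_le_cont (fun x => Rabs (f x))) with (g := fun x => C * / (1 + (x - m)^2)).
    - intros x. apply (continuous_comp f Rabs); auto. apply continuous_Rabs.
    - solve_continuous. assert (0 <= (x - m)^2) by apply pow2_ge_0. lra.
    - exact Hpq.
    - intros x _. apply Hb. }
  rewrite RInt_scal_cont, RInt_Cauchy_kernel
    by (solve_continuous; assert (0 <= (x - m)^2) by apply pow2_ge_0; lra).
  assert (h1 := atan_bound (q - m)). assert (h2 := atan_bound (p - m)).
  apply Rmult_le_compat_l; lra.
Qed.

Lemma bounded_has_sup (h : R -> R) U :
  (forall b, 0 <= b -> h b <= U) ->
  exists l, (forall b, 0 <= b -> h b <= l) /\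
            (forall eps, 0 < eps -> exists b, 0 <= b /\ l - eps < h b).
Proof.
  intros HU.
  set (E := fun v => exists b, 0 <= b /\ v = h b).
  destruct (completeness E) as [l [Hub Hlub]].
  - exists U. intros v [b [Hb ->]]. auto.
  - exists (h 0), 0. split; [lra | reflexivity].
  - exists l. split.
    + intros b Hb. apply Hub. exists b. auto.
    + intros eps Heps. apply NNPP. intros Hno.
      assert (l <= l - eps); [|lra].
      apply Hlub. intros v [b [Hb ->]].
      apply Rnot_lt_le. intros Hlt. apply Hno. exists b. auto.
Qed.

Lemma improper_integral_nonneg_of_sign (f : R -> R) U B :
  (forall x, continuous f x) ->
  (forall x, 0 <= x * f x) ->
  (forall p q, p <= q -> Rabs (RInt f p q) <= U) ->
  0 <= B -> (forall c, c <= 0 -> 0 <= RInt f c B) ->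
  exists L, improper_integral_R f L /\ 0 <= L.
Proof.
  intros Hf Hsign HU HB Hc.
  destruct (bounded_has_sup (fun b => RInt f 0 b) U) as [Lp [HLp HLp']].
  { intros b Hb. specialize (HU 0 b Hb). apply Rabs_le_between in HU. lra. }
  destruct (bounded_has_sup (fun c => - RInt f (- c) 0) U) as [Ln [HLn HLn']].
  { intros c Hc0. specialize (HU (- c) 0 ltac:(lra)). apply Rabs_le_between in HU. lra. }
  assert (mono_p : forall b b', 0 <= b <= b' -> RInt f 0 b <= RInt f 0 b').
  { intros b b' Hb. rewrite (RInt_Chasles_cont f Hf 0 b b').
    assert (0 <= RInt f b b') by (apply RInt_ge_0_cont; auto; try lra;
      intros x Hx; specialize (Hsign x); nra).
    lra. }
  assert (mono_n : forall c c', c' <= c <= 0 -> RInt f c' 0 <= RInt f c 0).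
  { intros c c' Hcc. rewrite (RInt_Chasles_cont f Hf c' c 0).
    assert (RInt f c' c <= 0) by (apply RInt_le_0_cont; auto; try lra;
      intros x Hx; specialize (Hsign x); nra).
    lra. }
  exists (Lp - Ln). split.
  - intros eps Heps.
    destruct (HLp' (eps / 2)) as [b0 [Hb0 Hb0']]; [lra|].
    destruct (HLn' (eps / 2)) as [c0 [Hc0 Hc0']]; [lra|].
    exists (Rmax b0 c0). intros p q Hp Hq.
    assert (h1 := Rmax_l b0 c0). assert (h2 := Rmax_r b0 c0).
    exists (ex_RInt_Reals_0 _ _ _ (ex_RInt_cont f Hf p q)).
    rewrite <- RInt_Reals, (RInt_Chasles_cont f Hf p 0 q).
    assert (A1 : RInt f 0 q <= Lp) by (apply HLp; lra).
    assert (A2 : - RInt f p 0 <= Ln) by (replace p with (- - p) by ring; apply HLn; lra).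
    assert (A3 : RInt f 0 b0 <= RInt f 0 q) by (apply mono_p; lra).
    assert (A4 : RInt f p 0 <= RInt f (- c0) 0) by (apply mono_n; lra).
    apply Rabs_def1; lra.
  - assert (Hbound : forall c, 0 <= c -> - RInt f (- c) 0 <= Lp).
    { intros c Hc0. specialize (Hc (- c) ltac:(lra)).
      rewrite (RInt_Chasles_cont f Hf (- c) 0 B) in Hc.
      assert (RInt f 0 B <= Lp) by (apply HLp; lra). lra. }
    apply Rnot_lt_le. intros Hlt.
    destruct (HLn' (Ln - Lp)) as [c [Hc0 Hc0']]; [lra|].
    specialize (Hbound c Hc0). lra.
Qed.

Definition kernel_sum (M : nat) (mu : nat -> R) (x : R) : R :=
  sumR M (fun j => gauss_kernel (mu j) x).

Lemma gauss_kernel_pos m x : 0 < gauss_kernel m x.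
Proof. apply exp_pos. Qed.

Lemma gauss_kernel_le_1 m x : gauss_kernel m x <= 1.
Proof.
  rewrite <- exp_0. apply exp_le_compat.
  assert (0 <= (x - m)^2) by apply pow2_ge_0. lra.
Qed.

Lemma ex_derive_gauss_kernel m x : ex_derive (gauss_kernel m) x.
Proof. unfold gauss_kernel. auto_derive. auto. Qed.

Lemma abs_mul_gauss_kernel_le x m :
  Rabs x * gauss_kernel m x <= 16 * (1 + m^2) / (1 + (x - m)^2).
Proof.
  unfold gauss_kernel. set (z := x - m).
  assert (Ez : exp (- z^2 / 2) = / exp (z^2 / 4) / exp (z^2 / 4)).
  { unfold Rdiv. rewrite <- !exp_Ropp, <- exp_plus. f_equal. field. }
  assert (hz := exp_ineq1_le (z^2 / 4)).
  assert (0 <= z^2) by apply pow2_ge_0.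
  assert (0 <= m^2) by apply pow2_ge_0.
  assert (habs : Rabs x <= (1 + x^2) / 2).
  { assert (0 <= (Rabs x - 1)^2) by apply pow2_ge_0.
    rewrite <- (pow2_abs x). lra. }
  assert (hx : 1 + x^2 <= 2 * (1 + m^2) * (1 + z^2)).
  { assert (0 <= (z - m)^2) by apply pow2_ge_0.
    assert (0 <= (z * m)^2) by apply pow2_ge_0.
    unfold z in *. nra. }
  rewrite Ez. set (e := exp (z^2 / 4)).
  assert (He : 1 + z^2 / 4 <= e) by exact hz.
  assert (0 <= Rabs x) by apply Rabs_pos.
  assert (key : Rabs x * (1 + z^2) <= 16 * (1 + m^2) * (e * e)).
  { apply Rle_trans with ((1 + m^2) * ((1 + z^2) * (1 + z^2))); [nra|].
    replace (16 * (1 + m^2) * (e * e)) with ((1 + m^2) * ((4 * e) * (4 * e))) by ring.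
    apply Rmult_le_compat_l; [lra|].
    apply Rmult_le_compat; lra. }
  apply Rmult_le_reg_r with (e * e * (1 + z^2)); [nra|].
  replace (Rabs x * (/ e / e) * (e * e * (1 + z ^ 2))) with (Rabs x * (1 + z^2))
    by (field; lra).
  replace (16 * (1 + m ^ 2) / (1 + z ^ 2) * (e * e * (1 + z ^ 2)))
    with (16 * (1 + m^2) * (e * e)) by (field; lra).
  exact key.
Qed.

Section Weights.

Variables (M : nat) (mu : nat -> R) (i : nat).
Hypothesis Hi : (i < M)%nat.

Lemma weight_eq x : weight M mu i x = gauss_kernel (mu i) x / kernel_sum M mu x.
Proof. reflexivity. Qed.

Lemma gauss_kernel_le_kernel_sum k x : (k < M)%nat -> gauss_kernel (mu k) x <= kernel_sum M mu x.
Proof.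
  intros Hk. apply (sumR_ge_term M (fun j => gauss_kernel (mu j) x)); auto.
  intros; apply Rlt_le, gauss_kernel_pos.
Qed.

Lemma kernel_sum_pos x : 0 < kernel_sum M mu x.
Proof.
  eapply Rlt_le_trans; [apply (gauss_kernel_pos (mu i)) | apply gauss_kernel_le_kernel_sum, Hi].
Qed.

Lemma kernel_sum_le x : kernel_sum M mu x <= INR M.
Proof.
  unfold kernel_sum. rewrite <- (Rmult_1_r (INR M)), <- sumR_const.
  apply sumR_le. intros; apply gauss_kernel_le_1.
Qed.

Lemma weight_pos x : 0 < weight M mu i x.
Proof.
  rewrite weight_eq. apply Rdiv_lt_0_compat; [apply gauss_kernel_pos | apply kernel_sum_pos].
Qed.

Lemma weight_le_kernel_ratio j x : (j < M)%nat ->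
  weight M mu i x <= gauss_kernel (mu i) x / gauss_kernel (mu j) x.
Proof.
  intros Hj. rewrite weight_eq. apply Rmult_le_compat_l; [apply Rlt_le, gauss_kernel_pos|].
  apply Rinv_le_contravar; [apply gauss_kernel_pos | apply gauss_kernel_le_kernel_sum, Hj].
Qed.

Lemma weight_le_1 x : weight M mu i x <= 1.
Proof.
  eapply Rle_trans; [apply (weight_le_kernel_ratio i), Hi|].
  unfold Rdiv. rewrite Rinv_r; [lra | apply Rgt_not_eq, gauss_kernel_pos].
Qed.

Lemma weight_ge x : gauss_kernel (mu i) x / INR M <= weight M mu i x.
Proof.
  rewrite weight_eq. apply Rmult_le_compat_l; [apply Rlt_le, gauss_kernel_pos|].
  apply Rinv_le_contravar; [apply kernel_sum_pos | apply kernel_sum_le].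
Qed.

Lemma ex_derive_weight x : ex_derive (weight M mu i) x.
Proof.
  apply (ex_derive_div (gauss_kernel (mu i)) (kernel_sum M mu)).
  - apply ex_derive_gauss_kernel.
  - apply ex_derive_sumR. intros j. apply ex_derive_gauss_kernel.
  - apply Rgt_not_eq, kernel_sum_pos.
Qed.

Hypothesis Hmu_i : 0 <= mu i.

(* Either the k-th kernel grows from x to y no faster than the i-th one, or
   [mu k > mu i] and then, as [y <= 1] and [mu i >= 0], it is at most [exp (1/2)]
   times the i-th kernel at y. *)
Lemma gauss_kernel_cross_le k x y : x <= y -> y <= 1 ->
  gauss_kernel (mu k) y * gauss_kernel (mu i) x <=
  exp (1/2) * gauss_kernel (mu i) y * gauss_kernel (mu i) x +
  gauss_kernel (mu k) x * gauss_kernel (mu i) y.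
Proof.
  intros Hxy Hy. unfold gauss_kernel. rewrite <- !exp_plus.
  assert (0 < exp (- (x - mu k) ^ 2 / 2 + - (y - mu i) ^ 2 / 2)) by apply exp_pos.
  assert (0 < exp (1 / 2 + - (y - mu i) ^ 2 / 2 + - (x - mu i) ^ 2 / 2)) by apply exp_pos.
  destruct (Rle_dec (mu k) (mu i)).
  - enough (exp (- (y - mu k) ^ 2 / 2 + - (x - mu i) ^ 2 / 2) <=
            exp (- (x - mu k) ^ 2 / 2 + - (y - mu i) ^ 2 / 2)) by lra.
    apply exp_le_compat.
    assert (0 <= (y - x) * (mu i - mu k)) by (apply Rmult_le_pos; lra). nra.
  - enough (exp (- (y - mu k) ^ 2 / 2 + - (x - mu i) ^ 2 / 2) <=
            exp (1 / 2 + - (y - mu i) ^ 2 / 2 + - (x - mu i) ^ 2 / 2)) by lra.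
    apply exp_le_compat.
    assert (0 <= (1 - (y - mu i)) * (mu k - mu i)) by (apply Rmult_le_pos; lra).
    assert (0 <= (mu k - mu i - 1)^2) by apply pow2_ge_0. nra.
Qed.

Lemma weight_le_shift x y : x <= y -> y <= 1 ->
  weight M mu i x <= (INR M * exp (1/2) + 1) * weight M mu i y.
Proof.
  intros Hxy Hy. rewrite !weight_eq.
  set (Kx := gauss_kernel (mu i) x). set (Ky := gauss_kernel (mu i) y).
  set (Sx := kernel_sum M mu x). set (Sy := kernel_sum M mu y).
  assert (HKx : 0 < Kx) by apply gauss_kernel_pos.
  assert (HKy : 0 < Ky) by apply gauss_kernel_pos.
  assert (HSx : Kx <= Sx) by apply gauss_kernel_le_kernel_sum, Hi.
  assert (HSy : Ky <= Sy) by apply gauss_kernel_le_kernel_sum, Hi.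
  assert (He : 0 < exp (1/2)) by apply exp_pos.
  assert (HM : 0 <= INR M) by apply pos_INR.
  assert (Hsum : Sy * Kx <= INR M * exp (1/2) * Ky * Kx + Sx * Ky).
  { unfold Sx, Sy, kernel_sum.
    replace (INR M * exp (1/2) * Ky * Kx) with (INR M * (exp (1/2) * Ky * Kx)) by ring.
    rewrite (Rmult_comm (sumR M _) Kx), (Rmult_comm (sumR M _) Ky).
    rewrite <- !sumR_scal, <- sumR_const, <- sumR_plus.
    apply sumR_le. intros k _. unfold Kx, Ky.
    assert (h := gauss_kernel_cross_le k x y Hxy Hy). lra. }
  assert (Hsum' : Kx * Sy <= (INR M * exp (1/2) + 1) * Ky * Sx).
  { assert (INR M * exp (1/2) * Ky * Kx <= INR M * exp (1/2) * Ky * Sx)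
      by (apply Rmult_le_compat_l; [|lra]; apply Rmult_le_pos; [apply Rmult_le_pos|]; lra).
    lra. }
  set (K := INR M * exp (1/2) + 1) in *.
  apply Rmult_le_reg_r with (Sy * Sx); [nra|].
  replace (Kx / Sx * (Sy * Sx)) with (Kx * Sy) by (field; lra).
  replace (K * (Ky / Sy) * (Sy * Sx)) with (K * Ky * Sx) by (field; lra).
  exact Hsum'.
Qed.

End Weights.

Lemma RInt_x_exp_01 m : 0 < m ->
  RInt (fun y => y * exp (m * y)) 0 1 = ((m - 1) * exp m + 1) / (m * m) :> R.
Proof.
  intros Hm. rewrite (RInt_antiderivative (fun y => (y / m - 1 / (m * m)) * exp (m * y))).
  - rewrite Rmult_1_r, Rmult_0_r, exp_0. field; lra.
  - intros y. auto_derive; auto; field; lra.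
  - solve_continuous.
Qed.

Lemma RInt_neg_x_exp_le m A : 0 < m -> 0 <= A ->
  RInt (fun x => - x * exp (m * x)) (- A) 0 <= 1 / (m * m).
Proof.
  intros Hm HA. rewrite (RInt_antiderivative (fun x => - (x / m - 1 / (m * m)) * exp (m * x))).
  - rewrite Rmult_0_r, exp_0.
    assert (0 < exp (m * - A)) by apply exp_pos.
    assert (0 <= A / m + 1 / (m * m))
      by (apply Rplus_le_le_0_compat; apply Rmult_le_pos; try apply Rlt_le, Rinv_0_lt_compat; nra).
    replace (- (- A / m - 1 / (m * m)) * exp (m * - A))
      with ((A / m + 1 / (m * m)) * exp (m * - A)) by (field; lra).
    replace (- (0 / m - 1 / (m * m)) * 1) with (1 / (m * m)) by (field; lra).
    assert (0 <= (A / m + 1 / (m * m)) * exp (m * - A)) by (apply Rmult_le_pos; lra).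
    lra.
  - intros x. auto_derive; auto; field; lra.
  - solve_continuous.
Qed.

Lemma RInt_x_gauss_kernel_01_ge m : 0 < m ->
  exp (-1/2) * ((m - 1) * exp m + 1) * (exp (- m^2 / 2) / (m * m))
  <= RInt (fun y => y * gauss_kernel m y) 0 1.
Proof.
  intros Hm.
  replace (exp (-1/2) * ((m - 1) * exp m + 1) * (exp (- m^2 / 2) / (m * m)))
    with (exp (-1/2 + - m^2 / 2) * RInt (fun y => y * exp (m * y)) 0 1)
    by (rewrite RInt_x_exp_01, exp_plus by auto; field; lra).
  rewrite <- RInt_scal_cont by solve_continuous.
  apply RInt_le_cont; try solve_continuous; [lra|].
  intros y Hy. unfold gauss_kernel.
  replace (exp (-1/2 + - m^2 / 2) * (y * exp (m * y))) with (y * exp (-1/2 + - m^2 / 2 + m * y))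
    by (rewrite exp_plus; ring).
  apply Rmult_le_compat_l; [lra|]. apply exp_le_compat. nra.
Qed.

Lemma RInt_neg_x_gauss_kernel_le m A : 0 < m -> 0 <= A ->
  RInt (fun x => - x * gauss_kernel m x) (- A) 0 <= exp (- m^2 / 2) / (m * m).
Proof.
  intros Hm HA.
  apply Rle_trans with (exp (- m^2 / 2) * RInt (fun x => - x * exp (m * x)) (- A) 0).
  - rewrite <- RInt_scal_cont by solve_continuous.
    apply RInt_le_cont; try solve_continuous; [lra|].
    intros x Hx. unfold gauss_kernel.
    replace (exp (- m^2 / 2) * (- x * exp (m * x))) with (- x * exp (- m^2 / 2 + m * x))
      by (rewrite exp_plus; ring).
    apply Rmult_le_compat_l; [lra|]. apply exp_le_compat. nra.
  - unfold Rdiv. rewrite <- (Rmult_1_l (/ (m * m))).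
    apply Rmult_le_compat_l; [apply Rlt_le, exp_pos|]. apply RInt_neg_x_exp_le; auto.
Qed.

Lemma RInt_neg_x_gauss_kernel_small k m A : 1 <= k -> 3 <= m -> k * exp 3 <= exp m -> 0 <= A ->
  2 * (k * exp (1/2) + 1) * RInt (fun x => - x * gauss_kernel m x) (- A) 0
  <= RInt (fun y => y * gauss_kernel m y) 0 1.
Proof.
  intros Hk Hm Hkm HA.
  assert (Hhalf : exp (1/2) * exp (1/2) = exp 1) by (rewrite <- exp_plus; f_equal; field).
  assert (Hhalf1 : 1 <= exp (1/2)) by (assert (h := exp_ineq1_le (1/2)); lra).
  assert (He3 : exp (3/2) * exp (3/2) = exp 3) by (rewrite <- exp_plus; f_equal; field).
  assert (He32 : 5/2 <= exp (3/2)) by (assert (h := exp_ineq1_le (3/2)); lra).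
  assert (He1 := exp_le_3).
  assert (Hem : 0 < exp m) by apply exp_pos.
  assert (Hnum : 2 * (k * exp (1/2) + 1) * exp (1/2) <= (m - 1) * exp m + 1).
  { assert (25/4 <= exp 3) by nra.
    assert (exp (1/2) <= 3) by nra.
    assert (2 * exp m <= (m - 1) * exp m) by nra.
    nra. }
  set (c := exp (- m^2 / 2) / (m * m)).
  assert (Hc : 0 < c) by (apply Rdiv_lt_0_compat; [apply exp_pos | nra]).
  assert (HN := RInt_neg_x_gauss_kernel_le m A ltac:(lra) HA). fold c in HN.
  assert (HQ := RInt_x_gauss_kernel_01_ge m ltac:(lra)). fold c in HQ.
  assert (Hinv : exp (-1/2) * exp (1/2) = 1)
    by (rewrite <- exp_plus; replace (-1/2 + 1/2) with 0 by field; apply exp_0).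
  eapply Rle_trans; [|exact HQ].
  apply Rle_trans with (2 * (k * exp (1/2) + 1) * c); [apply Rmult_le_compat_l; nra|].
  apply Rmult_le_compat_r; [lra|].
  apply Rmult_le_reg_l with (exp (1/2)); [apply exp_pos|].
  rewrite <- (Rmult_assoc (exp (1/2)) (exp (-1/2))), (Rmult_comm (exp (1/2)) (exp (-1/2))), Hinv.
  lra.
Qed.

Lemma neg_exponent_le x p n : x <= 0 -> 30 <= n -> Rabs (p + n) <= n / 6 ->
  Rmin 0 (((x - p)^2 - x^2) / 2) - x / 5 - (x + n)^2 / 2 <= - 7 / 100 * n^2.
Proof.
  intros Hx Hn Hp. apply Rabs_le_between in Hp.
  apply Rmin_case_strong; intros Hmin.
  - assert (x + n >= 5 * n / 12) by nra. nra.
  - replace (((x - p)^2 - x^2) / 2 - x / 5 - (x + n)^2 / 2)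
      with ((n - (p + n)) * (2 * (x + n) - (p + n) - n) / 2 + (n - (x + n)) / 5 - (x + n)^2 / 2)
      by field.
    set (t := x + n) in *. set (d := p + n) in *.
    assert (t <= (n + d) / 2) by (unfold t, d in *; nra).
    set (s := (n + d) / 2 - t).
    replace t with ((n + d) / 2 - s) by (unfold s; ring).
    assert (0 <= s) by (unfold s; lra).
    nra.
Qed.

Lemma RInt_exp_div10_le A : 0 <= A -> RInt (fun x => exp (x / 10)) (- A) 0 <= 10.
Proof.
  intros HA. rewrite (RInt_antiderivative (fun x => 10 * exp (x / 10))).
  - replace (0 / 10) with 0 by field. rewrite exp_0.
    assert (0 < exp (- A / 10)) by apply exp_pos. lra.
  - intros x. auto_derive; auto. unfold Rdiv. field.
  - solve_continuous.
Qed.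

Definition comp_integrand (M : nat) (mu : nat -> R) (i : nat) (m x : R) : R :=
  weight M mu i x * x * gauss_kernel m x.

Section Components.

Variables (M : nat) (mu : nat -> R) (i : nat).
Hypothesis Hi : (i < M)%nat.

Lemma continuous_comp_integrand m x : continuous (comp_integrand M mu i m) x.
Proof.
  apply continuous_of_ex_derive.
  apply (ex_derive_mult (fun x => weight M mu i x * x) (gauss_kernel m)).
  - apply (ex_derive_mult (weight M mu i) (fun x => x));
      [apply ex_derive_weight, Hi | apply ex_derive_id].
  - apply ex_derive_gauss_kernel.
Qed.

Let comp_cont m : forall x, continuous (comp_integrand M mu i m) x :=
  continuous_comp_integrand m.

Lemma comp_integrand_nonneg m x : 0 <= x -> 0 <= comp_integrand M mu i m x.
Proof.
  intros Hx. unfold comp_integrand.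
  assert (h := weight_pos M mu i Hi x). assert (h' := gauss_kernel_pos m x).
  apply Rmult_le_pos; [apply Rmult_le_pos|]; lra.
Qed.

Lemma abs_comp_integrand_le m x :
  Rabs (comp_integrand M mu i m x) <= 16 * (1 + m^2) / (1 + (x - m)^2).
Proof.
  eapply Rle_trans; [|apply abs_mul_gauss_kernel_le]. unfold comp_integrand.
  assert (h := weight_pos M mu i Hi x). assert (h1 := weight_le_1 M mu i Hi x).
  assert (h2 := gauss_kernel_pos m x). assert (0 <= Rabs x) by apply Rabs_pos.
  rewrite !Rabs_mult, (Rabs_pos_eq (weight _ _ _ _)), (Rabs_pos_eq (gauss_kernel _ _)) by lra.
  rewrite Rmult_assoc. rewrite <- (Rmult_1_l (Rabs x * gauss_kernel m x)) at 2.
  apply Rmult_le_compat_r; [apply Rmult_le_pos|]; lra.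
Qed.

Lemma RInt_comp_integrand_near_center a m : 3 < a -> 0 <= mu i <= 4 * a -> a < m < 3 * a ->
  / INR M * exp (-1/4 - 9 * a^2 / 4) <= RInt (comp_integrand M mu i m) 0 (4 * a).
Proof.
  intros Ha Hmu Hm.
  assert (HM : 1 <= INR M) by (apply (le_INR 1); lia).
  set (c := (mu i + m) / 2).
  set (C := / INR M * exp (-1/4 - 9 * a^2 / 4)).
  rewrite (RInt_Chasles_cont _ (comp_cont m) 0 (c - 1/2) (4 * a)),
    (RInt_Chasles_cont _ (comp_cont m) (c - 1/2) (c + 1/2) (4 * a)).
  assert (0 <= RInt (comp_integrand M mu i m) 0 (c - 1/2))
    by (apply RInt_ge_0_cont; auto; [unfold c; lra | intros; apply comp_integrand_nonneg; lra]).
  assert (0 <= RInt (comp_integrand M mu i m) (c + 1/2) (4 * a))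
    by (apply RInt_ge_0_cont; auto;
        [unfold c; lra | intros; apply comp_integrand_nonneg; unfold c in *; lra]).
  (* On [c - 1/2, c + 1/2] the product of the kernels at [mu i] and [m] is at least
     [exp (-1/4 - 9 a^2 / 4)], and [w_i >= kernel (mu i) / M]. *)
  enough (C <= RInt (comp_integrand M mu i m) (c - 1/2) (c + 1/2)) by lra.
  replace C with (RInt (fun _ => C) (c - 1/2) (c + 1/2))
    by (rewrite RInt_const; unfold scal; simpl; unfold mult; simpl; field).
  apply RInt_le_cont; [intros; apply continuous_const | auto | lra |].
  intros y Hy. unfold comp_integrand, C.
  assert (hw := weight_ge M mu i Hi y).
  assert (0 < gauss_kernel m y) by apply gauss_kernel_pos.
  assert (0 < gauss_kernel (mu i) y) by apply gauss_kernel_pos.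
  assert (0 < / INR M) by (apply Rinv_0_lt_compat; lra).
  apply Rle_trans with (gauss_kernel (mu i) y / INR M * 1 * gauss_kernel m y).
  - replace (gauss_kernel (mu i) y / INR M * 1 * gauss_kernel m y)
      with (/ INR M * (gauss_kernel (mu i) y * gauss_kernel m y)) by (field; lra).
    apply Rmult_le_compat_l; [lra|]. unfold gauss_kernel. rewrite <- exp_plus.
    apply exp_le_compat.
    assert ((y - mu i)^2 + (y - m)^2 = 2 * (y - c)^2 + (mu i - m)^2 / 2) by (unfold c; field).
    assert ((y - c)^2 <= 1/4) by nra.
    assert ((mu i - m)^2 <= 9 * a^2) by nra.
    lra.
  - apply Rmult_le_compat_r; [lra|]. apply Rmult_le_compat; try lra.
    + apply Rlt_le, Rdiv_lt_0_compat; lra.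
    + unfold c in Hy. lra.
Qed.

Hypothesis Hmu_i : 0 <= mu i.

Lemma weight_mul_moment_le m x : x <= 0 ->
  weight M mu i x * RInt (fun y => y * gauss_kernel m y) 0 1 <=
  (INR M * exp (1/2) + 1) * RInt (comp_integrand M mu i m) 0 1.
Proof.
  intros Hx.
  rewrite <- !RInt_scal_cont by (auto || solve_continuous).
  apply RInt_le_cont; [solve_continuous; apply ex_derive_weight, Hi | |lra|].
  - intros y. apply continuous_scal_R, comp_cont.
  - intros y Hy. unfold comp_integrand.
    assert (h := weight_le_shift M mu i Hi Hmu_i x y ltac:(lra) ltac:(lra)).
    assert (0 < gauss_kernel m y) by apply gauss_kernel_pos.
    assert (0 <= y * gauss_kernel m y) by nra.
    nra.
Qed.

Lemma RInt_comp_integrand_ge_half m A B :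
  3 <= m -> INR M * exp 3 <= exp m -> 0 <= A -> 1 <= B ->
  1/2 * RInt (comp_integrand M mu i m) 0 B <= RInt (comp_integrand M mu i m) (- A) B.
Proof.
  intros Hm HmM HA HB.
  assert (HM : 1 <= INR M) by (apply (le_INR 1); lia).
  set (K := INR M * exp (1/2) + 1).
  set (P := RInt (comp_integrand M mu i m) 0 1).
  set (Q := RInt (fun y => y * gauss_kernel m y) 0 1).
  set (N := RInt (fun x => - x * gauss_kernel m x) (- A) 0).
  assert (HKNQ : 2 * K * N <= Q) by (apply RInt_neg_x_gauss_kernel_small; auto).
  assert (HQ : 0 < Q).
  { eapply Rlt_le_trans; [|apply RInt_x_gauss_kernel_01_ge; lra].
    assert (0 < exp m) by apply exp_pos. assert (0 < exp (-1/2)) by apply exp_pos.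
    assert (0 < exp (- m^2 / 2) / (m * m)) by (apply Rdiv_lt_0_compat; [apply exp_pos | nra]).
    apply Rmult_lt_0_compat; [apply Rmult_lt_0_compat|]; nra. }
  assert (HP : 0 <= P)
    by (apply RInt_ge_0_cont; auto; [lra | intros; apply comp_integrand_nonneg; lra]).
  assert (HK : 0 < K) by (unfold K; assert (0 < exp (1/2)) by apply exp_pos; nra).
  assert (HN : 0 <= N).
  { apply RInt_ge_0_cont; [solve_continuous | lra |].
    intros x Hx. assert (0 < gauss_kernel m x) by apply gauss_kernel_pos. nra. }
  (* [weight_mul_moment_le] bounds [w_i] by [K P / Q] on the negative axis. *)
  assert (Hneg : - (K * P) * N <= Q * RInt (comp_integrand M mu i m) (- A) 0).
  { unfold N. rewrite <- !RInt_scal_cont by (auto || solve_continuous).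
    apply RInt_le_cont; [solve_continuous | | lra |].
    - intros x. apply continuous_scal_R, comp_cont.
    - intros x Hx. unfold comp_integrand.
      assert (h := weight_mul_moment_le m x ltac:(lra)). fold K P Q in h.
      assert (0 < gauss_kernel m x) by apply gauss_kernel_pos.
      assert (0 <= - x * gauss_kernel m x) by nra.
      nra. }
  assert (Hneg' : - (P / 2) <= RInt (comp_integrand M mu i m) (- A) 0).
  { apply Rmult_le_reg_l with Q; [exact HQ|].
    replace (Q * - (P / 2)) with (- (P * Q) / 2) by field. nra. }
  rewrite (RInt_Chasles_cont _ (comp_cont m) (- A) 0 B),
    (RInt_Chasles_cont _ (comp_cont m) 0 1 B).
  fold P.
  assert (0 <= RInt (comp_integrand M mu i m) 1 B)
    by (apply RInt_ge_0_cont; auto; intros; apply comp_integrand_nonneg; lra).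
  lra.
Qed.

Lemma weight_le_exp_Rmin j x : (j < M)%nat -> x <= 0 ->
  weight M mu i x <= exp (Rmin 0 (((x - mu j)^2 - x^2) / 2)).
Proof.
  intros Hj Hx. apply Rmin_case_strong; intros _.
  - rewrite exp_0. apply weight_le_1, Hi.
  - eapply Rle_trans; [apply (weight_le_kernel_ratio M mu i j x Hj)|].
    unfold gauss_kernel, Rdiv. rewrite <- exp_Ropp, <- exp_plus. apply exp_le_compat. nra.
Qed.

Lemma comp_integrand_far_left_ge j n x : (j < M)%nat -> 30 <= n ->
  Rabs (mu j + n) <= n / 6 -> x <= 0 ->
  - (10 * exp (- 7 / 100 * n ^ 2)) * exp (x / 10) <= comp_integrand M mu i (- n) x.
Proof.
  intros Hj Hn Hd Hx. unfold comp_integrand.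
  set (E := Rmin 0 (((x - mu j)^2 - x^2) / 2)).
  assert (hw := weight_le_exp_Rmin j x Hj Hx). fold E in hw.
  assert (hE := neg_exponent_le x (mu j) n Hx Hn Hd). fold E in hE.
  assert (hw0 := weight_pos M mu i Hi x).
  assert (hx : - x <= 10 * exp (- x / 10)).
  { assert (h := exp_ineq1_le (- x / 10)). lra. }
  assert (0 < gauss_kernel (- n) x) by apply gauss_kernel_pos.
  enough (weight M mu i x * (- x) * gauss_kernel (- n) x
          <= 10 * exp (- 7 / 100 * n ^ 2) * exp (x / 10)) by lra.
  apply Rle_trans with (exp E * (10 * exp (- x / 10)) * gauss_kernel (- n) x).
  - apply Rmult_le_compat_r; [lra|]. apply Rmult_le_compat; lra.
  - unfold gauss_kernel.
    replace (exp E * (10 * exp (- x / 10)) * exp (- (x - - n) ^ 2 / 2))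
      with (10 * exp (E + - x / 10 + - (x - - n) ^ 2 / 2)) by (rewrite !exp_plus; ring).
    rewrite Rmult_assoc, <- exp_plus. apply Rmult_le_compat_l; [lra|]. apply exp_le_compat.
    replace ((x - - n)^2) with ((x + n)^2) by ring. lra.
Qed.

Lemma RInt_comp_integrand_far_left_ge j n A B : (j < M)%nat -> 30 <= n ->
  Rabs (mu j + n) <= n / 6 -> 0 <= A -> 0 <= B ->
  - (100 * exp (- 7 / 100 * n ^ 2)) <= RInt (comp_integrand M mu i (- n)) (- A) B.
Proof.
  intros Hj Hn Hd HA HB.
  rewrite (RInt_Chasles_cont _ (comp_cont (- n)) (- A) 0 B).
  assert (0 <= RInt (comp_integrand M mu i (- n)) 0 B)
    by (apply RInt_ge_0_cont; auto; intros; apply comp_integrand_nonneg; lra).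
  assert (- (10 * exp (- 7 / 100 * n ^ 2)) * RInt (fun x => exp (x / 10)) (- A) 0
          <= RInt (comp_integrand M mu i (- n)) (- A) 0).
  { rewrite <- RInt_scal_cont by solve_continuous.
    apply RInt_le_cont; [solve_continuous | auto | lra |].
    intros x Hx. apply (comp_integrand_far_left_ge j); auto; lra. }
  assert (RInt (fun x => exp (x / 10)) (- A) 0 <= 10) by (apply RInt_exp_div10_le; auto).
  assert (0 < exp (- 7 / 100 * n ^ 2)) by apply exp_pos.
  assert (0 <= RInt (fun x => exp (x / 10)) (- A) 0)
    by (apply RInt_ge_0_cont; [solve_continuous | lra | intros; apply Rlt_le, exp_pos]).
  nra.
Qed.

End Components.

Definition mixture_integrand (M : nat) (mu mustar : nat -> R) (i : nat) (x : R) : R :=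
  weight M mu i x * x * mixture_density M mustar x.

Section Mixture.

Variables (M : nat) (mu mustar : nat -> R) (i : nat).
Hypothesis Hi : (i < M)%nat.

Let mixture_const := / (INR M * sqrt (2 * PI)).

Let mixture_const_pos : 0 < mixture_const.
Proof.
  apply Rinv_0_lt_compat, Rmult_lt_0_compat; [apply lt_0_INR; lia|].
  apply sqrt_lt_R0. assert (h := PI_RGT_0). lra.
Qed.

Lemma mixture_integrand_eq x :
  mixture_integrand M mu mustar i x =
  mixture_const * sumR M (fun j => comp_integrand M mu i (mustar j) x).
Proof.
  unfold mixture_integrand, mixture_density, comp_integrand, gauss.
  assert (0 < INR M) by (apply lt_0_INR; lia).
  assert (0 < sqrt (2 * PI)) by (apply sqrt_lt_R0; assert (h := PI_RGT_0); lra).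
  rewrite (sumR_ext M _ (fun j => / sqrt (2 * PI) * gauss_kernel (mustar j) x))
    by (intros; unfold gauss_kernel, Rdiv; ring).
  rewrite !sumR_scal. unfold mixture_const. field. lra.
Qed.

Lemma continuous_mixture_integrand x : continuous (mixture_integrand M mu mustar i) x.
Proof.
  apply continuous_of_ex_derive.
  apply (ex_derive_mult (fun x => weight M mu i x * x) (mixture_density M mustar)).
  - apply (ex_derive_mult (weight M mu i) (fun x => x));
      [apply ex_derive_weight, Hi | apply ex_derive_id].
  - apply (ex_derive_mult (fun _ => / INR M) (fun x => sumR M (fun j => gauss (x - mustar j)))).
    + apply ex_derive_const.
    + apply ex_derive_sumR. intros j. unfold gauss. auto_derive. auto.
Qed.

Lemma mixture_integrand_sign x : 0 <= x * mixture_integrand M mu mustar i x.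
Proof.
  rewrite mixture_integrand_eq.
  assert (Hsum : 0 <= sumR M (fun j => x * comp_integrand M mu i (mustar j) x)).
  { apply sumR_nonneg. intros j _. unfold comp_integrand.
    assert (h := weight_pos M mu i Hi x). assert (h' := gauss_kernel_pos (mustar j) x).
    replace (x * (weight M mu i x * x * gauss_kernel (mustar j) x))
      with (weight M mu i x * gauss_kernel (mustar j) x * (x * x)) by ring.
    apply Rmult_le_pos; [apply Rmult_le_pos |]; nra. }
  rewrite sumR_scal in Hsum.
  replace (x * (mixture_const * sumR M (fun j => comp_integrand M mu i (mustar j) x)))
    with (mixture_const * (x * sumR M (fun j => comp_integrand M mu i (mustar j) x))) by ring.
  apply Rmult_le_pos; [apply Rlt_le, mixture_const_pos | exact Hsum].
Qed.

Lemma RInt_mixture_integrand p q :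
  RInt (mixture_integrand M mu mustar i) p q =
  mixture_const * sumR M (fun j => RInt (comp_integrand M mu i (mustar j)) p q).
Proof.
  rewrite (RInt_ext (V:=R_CompleteNormedModule) _
    (fun x => mixture_const * sumR M (fun j => comp_integrand M mu i (mustar j) x)))
    by (intros; apply mixture_integrand_eq).
  destruct (RInt_sumR M (fun j => comp_integrand M mu i (mustar j)) p q) as [Hex Heq].
  { intros j. apply ex_RInt_cont. intros; apply continuous_comp_integrand, Hi. }
  rewrite <- Heq. apply (RInt_scal (V:=R_CompleteNormedModule)), Hex.
Qed.

Lemma abs_RInt_mixture_integrand_le p q : p <= q ->
  Rabs (RInt (mixture_integrand M mu mustar i) p q) <=
  mixture_const * sumR M (fun j => 16 * (1 + mustar j ^ 2) * PI).
Proof.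
  assert (Hc := mixture_const_pos).
  intros Hpq. rewrite RInt_mixture_integrand, Rabs_mult, (Rabs_pos_eq mixture_const) by lra.
  apply Rmult_le_compat_l; [lra|].
  eapply Rle_trans; [apply Rabs_sumR_le|]. apply sumR_le. intros j _.
  apply abs_RInt_le_Cauchy with (mustar j); auto.
  - intros; apply continuous_comp_integrand, Hi.
  - intros; apply abs_comp_integrand_le, Hi.
Qed.

Lemma RInt_mixture_integrand_nonneg p q :
  0 <= sumR M (fun j => RInt (comp_integrand M mu i (mustar j)) p q) ->
  0 <= RInt (mixture_integrand M mu mustar i) p q.
Proof.
  intros H. rewrite RInt_mixture_integrand.
  apply Rmult_le_pos; [apply Rlt_le, mixture_const_pos | exact H].
Qed.

End Mixture.

Lemma INR_mul_exp3_le M m : (0 < M)%nat -> ln (INR M) + 3 < m -> INR M * exp 3 <= exp m.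
Proof.
  intros HM Hm. assert (0 < INR M) by (apply lt_0_INR; auto).
  rewrite <- (exp_ln (INR M)) at 1 by auto. rewrite <- exp_plus. apply exp_le_compat. lra.
Qed.

Lemma far_left_mass_small M a : (0 < M)%nat -> ln (INR M) + 3 < a ->
  INR M * (100 * exp (-7 * a^2)) <= / 2 * (/ INR M * exp (-1/4 - 9 * a^2 / 4)).
Proof.
  intros HM Ha.
  assert (HMpos : 0 < INR M) by (apply lt_0_INR; auto).
  assert (Hln : 0 <= ln (INR M)) by (rewrite <- ln_1; apply ln_le; [lra | apply (le_INR 1); lia]).
  assert (He8 : 200 <= exp 8).
  { assert (h := exp_ineq1_le 1).
    assert (exp 2 = exp 1 * exp 1) by (rewrite <- exp_plus; f_equal; ring).
    assert (exp 4 = exp 2 * exp 2) by (rewrite <- exp_plus; f_equal; ring).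
    assert (exp 8 = exp 4 * exp 4) by (rewrite <- exp_plus; f_equal; ring).
    assert (4 <= exp 2) by nra. assert (16 <= exp 4) by nra. nra. }
  assert (Hexp : exp 8 * INR M * INR M * exp (-7 * a^2) <= exp (-1/4 - 9 * a^2 / 4)).
  { rewrite <- (exp_ln (INR M)) by auto. rewrite <- !exp_plus. apply exp_le_compat. nra. }
  apply Rmult_le_reg_l with (2 * INR M); [lra|].
  replace (2 * INR M * (/ 2 * (/ INR M * exp (-1/4 - 9 * a^2 / 4))))
    with (exp (-1/4 - 9 * a^2 / 4)) by (field; lra).
  assert (0 < exp (-7 * a^2)) by apply exp_pos.
  assert (200 * (INR M * INR M * exp (-7 * a^2)) <= exp 8 * (INR M * INR M * exp (-7 * a^2)))
    by (apply Rmult_le_compat_r; [apply Rlt_le, Rmult_lt_0_compat; [nra|] |]; lra).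
  lra.
Qed.

Lemma RInt_mixture_integrand_ge_0 M a mustar mu i c :
  a > ln (INR M) + 3 ->
  (forall j, (j < M)%nat -> mustar j < -10 * a \/ a < mustar j) ->
  (exists j, (j < M)%nat /\ a < mustar j /\ mustar j < 3 * a) ->
  (forall j, (j < M)%nat -> mustar j < -10 * a ->
     exists j', (j' < M)%nat /\ Rabs (mu j' - mustar j) <= Rabs (mustar j) / 6) ->
  (i < M)%nat -> 0 <= mu i <= 4 * a -> c <= 0 ->
  0 <= RInt (mixture_integrand M mu mustar i) c (4 * a).
Proof.
  intros ha hsep [j0 [Hj0 Hj0a]] hcov Hi Hmu Hc.
  assert (HM : (0 < M)%nat) by lia.
  assert (Hln : 0 <= ln (INR M)) by (rewrite <- ln_1; apply ln_le; [lra | apply (le_INR 1); lia]).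
  apply RInt_mixture_integrand_nonneg; auto.
  replace c with (- - c) by ring.
  set (Ev := 100 * exp (-7 * a^2)).
  set (D := fun j => RInt (comp_integrand M mu i (mustar j)) (- - c) (4 * a)).
  assert (Hright : forall j, (j < M)%nat -> a < mustar j ->
            1/2 * RInt (comp_integrand M mu i (mustar j)) 0 (4 * a) <= D j).
  { intros j Hj Hja. apply RInt_comp_integrand_ge_half; auto; try lra.
    apply INR_mul_exp3_le; auto; lra. }
  assert (Hall : forall j, (j < M)%nat -> - Ev <= D j).
  { intros j Hj. destruct (hsep j Hj) as [Hn | Hp].
    - destruct (hcov j Hj Hn) as [j' [Hj' Hd]].
      rewrite (Rabs_left1 (mustar j)) in Hd by lra.
      assert (h := RInt_comp_integrand_far_left_ge M mu i Hi ltac:(lra)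
        j' (- mustar j) (- c) (4 * a)
        Hj' ltac:(lra) ltac:(replace (mu j' + - mustar j) with (mu j' - mustar j) by ring; lra)
        ltac:(lra) ltac:(lra)).
      rewrite Ropp_involutive in h.
      assert (exp (- 7 / 100 * (- mustar j) ^ 2) <= exp (-7 * a^2))
        by (apply exp_le_compat; nra).
      unfold D, Ev. lra.
    - assert (0 <= RInt (comp_integrand M mu i (mustar j)) 0 (4 * a)).
      { apply RInt_ge_0_cont; [apply continuous_comp_integrand, Hi | lra |].
        intros; apply comp_integrand_nonneg; auto; lra. }
      assert (h := Hright j Hj Hp). unfold Ev. assert (0 < exp (-7 * a^2)) by apply exp_pos.
      lra. }
  assert (Hj0D : / 2 * (/ INR M * exp (-1/4 - 9 * a^2 / 4)) <= D j0).
  { assert (h := Hright j0 Hj0 ltac:(lra)).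
    assert (h' := RInt_comp_integrand_near_center M mu i Hi a (mustar j0) ltac:(lra) Hmu Hj0a).
    lra. }
  assert (Hsum : D j0 + Ev <= sumR M (fun j => D j + Ev))
    by (apply (sumR_ge_term M (fun j => D j + Ev)); auto; intros j Hj; specialize (Hall j Hj); lra).
  rewrite sumR_plus, sumR_const in Hsum.
  assert (HEv := far_left_mass_small M a HM ltac:(lra)). fold Ev in HEv.
  assert (0 < exp (-7 * a^2)) by apply exp_pos.
  change (0 <= sumR M D). unfold Ev in *. lra.
Qed.

Theorem lemma4 (M : nat) (a : R) (mustar mu : nat -> R)
  (ha : a > ln (INR M) + 3)
  (hsep : forall j : nat, (j < M)%nat -> mustar j < -10 * a \/ a < mustar j)
  (hone : exists j : nat, (j < M)%nat /\ a < mustar j /\ mustar j < 3 * a)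
  (hcov : forall j : nat, (j < M)%nat -> mustar j < -10 * a ->
            exists j' : nat, (j' < M)%nat /\
              Rabs (mu j' - mustar j) <= Rabs (mustar j) / 6) :
  forall i : nat, (i < M)%nat -> 0 <= mu i <= 4 * a ->
    exists L : R,
      mixture_expectation_is M mustar (fun x => weight M mu i x * x) L /\ 0 <= L.
Proof.
  intros i Hi Hmu.
  apply (improper_integral_nonneg_of_sign (mixture_integrand M mu mustar i)
           (/ (INR M * sqrt (2 * PI)) * sumR M (fun j => 16 * (1 + mustar j ^ 2) * PI))
           (4 * a)).
  - apply continuous_mixture_integrand, Hi.
  - apply mixture_integrand_sign, Hi.
  - apply abs_RInt_mixture_integrand_le, Hi.
  - lra.
  - intros c Hc. apply (RInt_mixture_integrand_ge_0 M a); auto.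
Qed.
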